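(* Let \(S\) be an inverse semigroup with zero and unit, let \(E=E(S)\), and let \(\hat{E}\) carry the canonical action of \(S\) by the partial homeomorphisms \(c_g\colon U_{g^*g}\to U_{gg^*}\), \(c_g(\varphi)(e)=\varphi(g^*eg)\). Then this action is a terminal object in the category of actions of \(S\) on topological spaces: for every topological space \(X\) with an action of \(S\), there is a unique \(S\)-equivariant continuous map \(X\to\hat{E}\).
   Context: Inverse semigroups are assumed to have a zero \(0\) and a unit \(1\); homomorphisms preserve zero and unit. \(E=E(S)\) is the semilattice of idempotents of \(S\), ordered by \(e\le f\iff ef=e\). A character on \(E\) is a map \(\varphi\colon E\to\{0,1\}\) with \(\varphi(0)=0\), \(\varphi(1)=1\) and \(\varphi(ef)=\varphi(e)\varphi(f)\). \(\hat{E}\) is the set of characters. For \(e\in E\), \(U_e=\{\varphi\in\hat E:\varphi(e)=1\}\), and \(\hat{E}\) carries the topology generated by the sets \(U_e\). A partial homeomorphism of a space \(X\) is a homeomorphism between open subsets of \(X\). These form an inverse semigroup under composition of partial maps, with unit \(\mathrm{id}_X\) and zero the empty map. An action of \(S\) on a topological space \(X\) is a unit- and zero-preserving homomorphism from \(S\) to this inverse semigroup; write \(s\cdot x\) when defined. A map \(f\colon X\to Y\) between spaces with \(S\)-actions is \(S\)-equivariant if for all \(s\in S\), \(x\in X\): \(s\cdot x\) is defined iff \(s\cdot f(x)\) is defined, and then \(f(s\cdot x)=s\cdot f(x)\). *)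

From HB Require Import structures.
From mathcomp Require Import all_boot all_order.
From mathcomp Require Import all_classical topology.
Set Implicit Arguments. Unset Strict Implicit. Unset Printing Implicit Defensive.
Local Open Scope classical_set_scope.

(* Inverse semigroup with zero and unit: a regular *-semigroup
   (s s' s = s and s' s s' = s', with s' the star of s) whose idempotents commute. *)
Record invSemigroup := InvSemigroup {
  car :> Type;
  mul : car -> car -> car;
  star : car -> car;
  zero : car;
  one : car;
  mulA : forall a b c, mul a (mul b c) = mul (mul a b) c;
  mul_star : forall s, mul (mul s (star s)) s = s;
  star_mul : forall s, mul (mul (star s) s) (star s) = star s;
  idem_comm : forall e f, mul e e = e -> mul f f = f -> mul e f = mul f e;
  mul0s : forall s, mul zero s = zero;
  muls0 : forall s, mul s zero = zero;
  mul1s : forall s, mul one s = s;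
  muls1 : forall s, mul s one = s }.

Section InvSemigroupDefs.
Variable S : invSemigroup.
Local Notation "a * b" := (mul a b).


Definition idem := { e : S | e * e = e }.

Lemma idem0 : (zero S) * (zero S) = zero S.
Proof. by rewrite mul0s. Qed.
Lemma idem1 : (one S) * (one S) = one S.
Proof. by rewrite mul1s. Qed.
Definition idem_zero : idem := exist _ (zero S) idem0.
Definition idem_one : idem := exist _ (one S) idem1.

Lemma idem_mul_proof (e f : idem) : (proj1_sig e * proj1_sig f) * (proj1_sig e * proj1_sig f) = proj1_sig e * proj1_sig f.
Proof.
case: e f => e He [f Hf] /=.
by rewrite -mulA [f * (e * f)]mulA (idem_comm Hf He) -mulA Hf mulA He.
Qed.
Definition idem_mul (e f : idem) : idem := exist _ (proj1_sig e * proj1_sig f) (idem_mul_proof e f).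

Lemma sss_proof (s : S) : ((star s) * s) * ((star s) * s) = (star s) * s.
Proof. by rewrite mulA star_mul. Qed.
Definition idem_ss (s : S) : idem := exist _ ((star s) * s) (sss_proof s).

Lemma conj_proof (g : S) (e : idem) :
  ((star g) * proj1_sig e * g) * ((star g) * proj1_sig e * g) = (star g) * proj1_sig e * g.
Proof.
case: e => e He /=.
have Hgg : (g * (star g)) * (g * (star g)) = g * (star g) by rewrite mulA mul_star.
rewrite -!mulA [g * ((star g) * (e * g))]mulA [(g * (star g)) * (e * g)]mulA.
rewrite (idem_comm Hgg He) -[(e * (g * (star g))) * g]mulA -[g * (star g) * g]mulA.
rewrite [g * ((star g) * g)]mulA mul_star.
rewrite [(star g) * (e * (e * g))]mulA [(star g) * e * (e * g)]mulA -[(star g) * e * e]mulA He.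
by rewrite -mulA.
Qed.
Definition idem_conj (g : S) (e : idem) : idem := exist _ ((star g) * proj1_sig e * g) (conj_proof g e).

Definition is_character (phi : idem -> bool) : Prop :=
  [/\ phi idem_zero = false, phi idem_one = true &
      forall e f, phi (idem_mul e f) = phi e && phi f].

Definition hatE := { phi : idem -> bool | is_character phi }.

Definition U (e : idem) : set hatE := [set phi | proj1_sig phi e = true].

End InvSemigroupDefs.

Definition is_topology (T : Type) (tau : set (set T)) : Prop :=
  [/\ tau setT,
      forall A B, tau A -> tau B -> tau (A `&` B) &
      forall (I : Type) (F : I -> set T), (forall i, tau (F i)) -> tau (\bigcup_i F i)].

Definition generated_open (T : Type) (B : set (set T)) : set (set T) :=
  fun O => forall tau : set (set T), is_topology tau -> B `<=` tau -> tau O.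

Definition hatE_open (S : invSemigroup) : set (set (hatE S)) :=
  generated_open (fun O => exists e : idem S, O = U e).

Definition continuous_to_hatE (S : invSemigroup) (X : topologicalType)
  (f : X -> hatE S) : Prop :=
  forall O, hatE_open O -> open (f @^-1` O).

(* An action of S on X by partial homeomorphisms: s acts by the partial map
   act s with domain dom s (values of act s outside dom s are irrelevant). *)
Definition partial_homeo (X : topologicalType) (D : set X) (a : X -> X) : Prop :=
  [/\ open D, open (a @` D), {within D, continuous a} &
      exists b : X -> X,
        [/\ forall x, D x -> b (a x) = x,
            forall y, (a @` D) y -> D (b y) /\ a (b y) = y &
            {within a @` D, continuous b}]].

Definition is_action (S : invSemigroup) (X : topologicalType)
  (dom : S -> set X) (act : S -> X -> X) : Prop :=
  [/\ forall s, partial_homeo (dom s) (act s),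
      forall s t, dom (mul s t) = [set x | dom t x /\ dom s (act t x)],
      forall s t x, dom (mul s t) x -> act (mul s t) x = act s (act t x),
      dom (one S) = setT /\ (forall x, act (one S) x = x) &
      dom (zero S) = set0].

(* S-equivariance of f : X -> \hat E for the canonical action
   c_g : U_{(star g)g} -> U_{gg^*}, c_g(phi)(e) = phi((star g) e g). *)
Definition equivariant_to_hatE (S : invSemigroup) (X : topologicalType)
  (dom : S -> set X) (act : S -> X -> X) (f : X -> hatE S) : Prop :=
  forall (s : S) (x : X),
    (dom s x <-> U (idem_ss s) (f x)) /\
    (dom s x -> forall e : idem S, proj1_sig (f (act s x)) e = proj1_sig (f x) (idem_conj s e)).

From Pilot Require Import Defs.
From mathcomp Require Import all_boot all_order.
From mathcomp Require Import all_classical topology.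
Set Implicit Arguments. Unset Strict Implicit. Unset Printing Implicit Defensive.
Local Open Scope classical_set_scope.

(* The terminal map sends x to the character e |-> [x \in dom e]: it is a
   character because dom (e f) = dom e `&` dom f for idempotents, it is
   continuous because it pulls U_e back to the open set dom e, and it is
   equivariant because dom (g^* e g) = act g @^-1` dom e inside dom g.
   Conversely, equivariance alone forces f(x)(e) = [x \in dom (e^* e)] =
   [x \in dom e] for every idempotent e, whence uniqueness. *)

Lemma open_preimage_generated (T : Type) (X : topologicalType)
    (B : set (set T)) (f : X -> T) :
  (forall A, B A -> open (f @^-1` A)) ->
  forall O, generated_open B O -> open (f @^-1` O).
Proof.
move=> openfB O genO; apply: (genO (fun O => open (f @^-1` O))) => //.
split.
- by rewrite preimage_setT; exact: openT.
- by move=> A A' oA oA'; rewrite preimage_setI; exact: openI.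
- by move=> I F oF; rewrite preimage_bigcup; exact: bigcup_open.
Qed.

Section Idempotents.
Variable S : invSemigroup.
(* unqualified [mul] would resolve to MathComp's monoid multiplication *)
Local Notation "a * b" := (Defs.mul a b).

Lemma star_mul_idem (e : S) : e * e = e -> star e * e = e.
Proof.
move=> ee; have -> : star e * e = (star e * e) * e by rewrite -mulA ee.
by rewrite (idem_comm (sss_proof e) ee) mulA mul_star.
Qed.

Lemma idem_ss_idem (e : idem S) : idem_ss (proj1_sig e) = e.
Proof. by case: e => e ee; apply: eq_exist; rewrite /= star_mul_idem. Qed.

End Idempotents.

Section ActionToHatE.
Variables (S : invSemigroup) (X : topologicalType).
Variables (dom : S -> set X) (act : S -> X -> X).
Hypothesis actP : is_action dom act.
Local Notation "a * b" := (Defs.mul a b).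

Lemma open_dom (s : S) : open (dom s).
Proof. by case: actP => homeo _ _ _ _; case: (homeo s). Qed.

Lemma dom_mul (s t : S) (x : X) : dom (s * t) x <-> dom t x /\ dom s (act t x).
Proof. case: actP => _ -> _ _ _; exact: iff_refl. Qed.

Lemma act_mul (s t : S) (x : X) : dom (s * t) x -> act (s * t) x = act s (act t x).
Proof. case: actP => _ _ actM _ _; exact: actM. Qed.

Lemma act_idem (e : S) (x : X) : e * e = e -> dom e x -> act e x = x.
Proof.
move=> ee dex; case: actP => homeo _ _ _ _; case: (homeo e) => _ _ _ [b [actK _ _]].
have deex : dom (e * e) x by rewrite ee.
have [_ deax] := proj1 (dom_mul e e x) deex.
have aa : act e (act e x) = act e x by rewrite -(act_mul deex) ee.
(* apply the inverse partial map of act e to both sides of aa *)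
by rewrite -[RHS](actK x dex) -{2}aa actK.
Qed.

Lemma dom_mul_idem (e f : S) (x : X) :
  f * f = f -> dom (e * f) x <-> dom e x /\ dom f x.
Proof.
move=> ff; rewrite dom_mul; split=> -[dx dy].
- by rewrite (act_idem ff dx) in dy.
- by rewrite (act_idem ff dy).
Qed.

Lemma dom_star_mul (s : S) (x : X) : dom (star s * s) x <-> dom s x.
Proof.
split=> [/dom_mul[] // | dsx].
have : dom (s * (star s * s)) x by rewrite mulA mul_star.
by case/dom_mul.
Qed.

Lemma dom_conj (s e : S) (x : X) : e * e = e -> dom s x ->
  dom (star s * e * s) x <-> dom e (act s x).
Proof.
move=> ee dsx; rewrite dom_mul dom_mul; split=> [[_ []] //|dey].
split=> //; split=> //; rewrite (act_idem ee dey).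
by case/dom_star_mul/dom_mul: dsx.
Qed.

Definition dom_char_fun (x : X) (e : idem S) : bool := `[< dom (proj1_sig e) x >].

Lemma is_character_dom_char_fun (x : X) : is_character (dom_char_fun x).
Proof.
case: actP => _ _ _ [dom1 _] dom0; split.
- by apply/asboolP; rewrite /= dom0.
- by apply/asboolP; rewrite /= dom1.
- move=> e [f ff]; apply: asbool_equiv_eqP; first exact: andP.
  by rewrite /= asboolE asboolE; exact: dom_mul_idem.
Qed.

Definition dom_char (x : X) : hatE S := exist _ _ (is_character_dom_char_fun x).

Lemma preimage_dom_char_U (e : idem S) : dom_char @^-1` U e = dom (proj1_sig e).
Proof. by apply/seteqP; split=> x /asboolP. Qed.

Lemma continuous_dom_char : continuous_to_hatE dom_char.
Proof.
apply: open_preimage_generated => _ [e ->].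
by rewrite preimage_dom_char_U; exact: open_dom.
Qed.

Lemma equivariant_dom_char : equivariant_to_hatE dom act dom_char.
Proof.
move=> s x; split.
- rewrite /U /= /dom_char_fun /=.
  by split=> [/dom_star_mul/asboolP | /asboolP/dom_star_mul].
- move=> dsx [e ee]; apply: asbool_equiv_eq.
  exact: iff_sym (dom_conj ee dsx).
Qed.

Lemma equivariant_to_hatE_dom_char (f : X -> hatE S) :
  equivariant_to_hatE dom act f -> f = dom_char.
Proof.
move=> eqf; apply: funext => x; apply: eq_sig_hprop => [? ? ?|].
  exact: Prop_irrelevance.
apply: funext => e; have [domf _] := eqf (proj1_sig e) x.
rewrite /U idem_ss_idem in domf.
by apply/esym/asbool_equiv_eqP; first exact: idP.
Qed.

End ActionToHatE.

Theorem theorem2p22 (S : invSemigroup) (X : topologicalType)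
  (dom : S -> set X) (act : S -> X -> X) :
  is_action dom act ->
  exists! f : X -> hatE S,
    continuous_to_hatE f /\ equivariant_to_hatE dom act f.
Proof.
move=> actP; exists (dom_char actP); split.
  by split; [exact: continuous_dom_char | exact: equivariant_dom_char].
by move=> f [_ /(equivariant_to_hatE_dom_char actP)].
Qed.
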